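(* Let $\{a_n\}_{n\ge0}$ be a real-valued sequence with $\{a_n\}\in GMS$. The following are equivalent: (i) The series $\sum_{n=0}^\infty a_n$ converges. (ii) The partial sums $\sum_{n=0}^N a_n\cos(nx)$ converge uniformly in $x\in\mathbb{R}$ as $N\to\infty$. (iii) The series $\sum_{n=0}^\infty a_n\cos(nx)$ converges for every $x\in\mathbb{R}$ and its sum is a bounded function of $x$.
   Context: A complex sequence $\{a_n\}_{n\ge0}$ tending to $0$ is general monotone, written $\{a_n\}\in GMS$, if there exist constants $C>1$ and $\lambda>1$ such that for every $n\in\mathbb{N}$, $$\sum_{k=n}^{2n}|a_k-a_{k+1}|\le C\sum_{n/\lambda\le k\le\lambda n}\frac{|a_k|}{k}.$$ *)

From Stdlib Require Import Reals Lra Lia ZArith.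
From Coquelicot Require Import Coquelicot.
Open Scope R_scope.

Definition gms_rhs_term (a : nat -> R) (lam : R) (n k : nat) : R :=
  if Rle_dec (INR n / lam) (INR k) then
    if Rle_dec (INR k) (lam * INR n) then Rabs (a k) / INR k else 0
  else 0.

(* The right-hand sum ranges over k = 0 .. up(lam*n) with the indicator,
   which covers all integers k <= lam*n. *)
Definition GMS (a : nat -> R) : Prop :=
  is_lim_seq a 0 /\
  exists C lam : R, 1 < C /\ 1 < lam /\
    forall n : nat, (1 <= n)%nat ->
      sum_f_R0 (fun j => Rabs (a (n + j)%nat - a (n + j + 1)%nat)) n
      <= C * sum_f_R0 (gms_rhs_term a lam n) (Z.to_nat (up (lam * INR n))).

Definition cos_partial (a : nat -> R) (N : nat) (x : R) : R :=
  sum_f_R0 (fun n => a n * cos (INR n * x)) N.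

From Stdlib Require Import Reals Lra Lia ZArith Psatz.
From Coquelicot Require Import Coquelicot.
Open Scope R_scope.

(* (ii) => (iii) is immediate and (iii) => (i) is the case x = 0, so everything rests on
   (i) => (ii): the tails  sum_{p <= k < p+m} a_k cos(kx)  are small uniformly in x.
   Splitting such a tail at k ~ 1/|sin(x/2)|, Abel summation bounds the low frequencies by the
   Cauchy tails of  sum a_k  and the high ones, via the Dirichlet kernel, by
   p (|a_(p+L)| + sum_(p <= k < p+L) |a_(k+1) - a_k|); so it suffices that
   n sum_(k >= n) |a_(k+1) - a_k| -> 0.
   For a GMS sequence the variation on the dyadic block [2^j, 2^(j+1)] is at most a constant
   times the masses y_i = sum_(k in block i) |a_k| of the nearby blocks divided by 2^i, while
   Abel summation and Cauchy-Schwarz inside block j give  y_j^2 <= eps * D * y_i  for some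
   i < j + K once the Cauchy tails of  sum a_k  are below eps.  Iterating this inequality shows
   first that y is bounded (otherwise it would grow faster than the trivial bound 2^j sup|a|),
   then that y_j -> 0; summing the block variations geometrically finishes the proof. *)

Fixpoint ssum (f : nat -> R) (n : nat) : R :=
  match n with O => 0 | S n => ssum f n + f n end.

Lemma ssum_ext f g n : (forall i, (i < n)%nat -> f i = g i) -> ssum f n = ssum g n.
Proof.
  induction n as [|n IH]; intros H; simpl; auto.
  rewrite IH, H; auto; intros; apply H; lia.
Qed.

Lemma ssum_le f g n : (forall i, (i < n)%nat -> f i <= g i) -> ssum f n <= ssum g n.
Proof.
  induction n as [|n IH]; intros H; simpl; [lra|].
  apply Rplus_le_compat; [apply IH; intros; apply H|apply H]; lia.
Qed.

Lemma ssum_const c n : ssum (fun _ => c) n = INR n * c.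
Proof. induction n as [|n IH]; simpl ssum; [simpl; ring|]. rewrite IH, S_INR; ring. Qed.

Lemma ssum_nonneg f n : (forall i, (i < n)%nat -> 0 <= f i) -> 0 <= ssum f n.
Proof.
  intros H. rewrite <- (Rmult_0_r (INR n)), <- ssum_const. now apply ssum_le.
Qed.

Lemma ssum_scal c f n : ssum (fun i => c * f i) n = c * ssum f n.
Proof. induction n as [|n IH]; simpl; [ring|]. rewrite IH; ring. Qed.

Lemma ssum_plus f g n : ssum (fun i => f i + g i) n = ssum f n + ssum g n.
Proof. induction n as [|n IH]; simpl; [ring|]. rewrite IH; ring. Qed.

Lemma ssum_abs f n : Rabs (ssum f n) <= ssum (fun i => Rabs (f i)) n.
Proof.
  induction n as [|n IH]; simpl; [rewrite Rabs_R0; lra|].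
  eapply Rle_trans; [apply Rabs_triang|lra].
Qed.

Lemma ssum_split f n k : ssum f (n + k) = ssum f n + ssum (fun i => f (n + i)%nat) k.
Proof.
  induction k as [|k IH]; simpl; [rewrite Nat.add_0_r; ring|].
  rewrite Nat.add_succ_r; simpl. rewrite IH; ring.
Qed.

Lemma ssum_sub f n m : (m <= n)%nat ->
  ssum f n - ssum f m = ssum (fun i => f (m + i)%nat) (n - m).
Proof.
  intros Hmn. replace n with (m + (n - m))%nat at 1 by lia. rewrite ssum_split.
  replace (m + (n - m) - m)%nat with (n - m)%nat by lia. ring.
Qed.

Lemma ssum_le_ssum_nonneg f n m : (forall i, 0 <= f i) -> (n <= m)%nat -> ssum f n <= ssum f m.
Proof.
  intros Hf Hnm. replace m with (n + (m - n))%nat by lia. rewrite ssum_split.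
  assert (0 <= ssum (fun i => f (n + i)%nat) (m - n)) by (apply ssum_nonneg; auto). lra.
Qed.

Lemma le_ssum_nonneg f n i : (forall k, 0 <= f k) -> (i < n)%nat -> f i <= ssum f n.
Proof.
  intros Hf Hi. apply Rle_trans with (ssum f (S i)).
  - simpl. assert (0 <= ssum f i) by (apply ssum_nonneg; auto). lra.
  - apply ssum_le_ssum_nonneg; auto.
Qed.

Lemma ssum_S_sum_f_R0 f n : ssum f (S n) = sum_f_R0 f n.
Proof. induction n as [|n IH]; simpl; [ring|]. simpl in IH. rewrite <- IH. ring. Qed.

Lemma Rabs_sub_le x y : Rabs (x - y) <= Rabs x + Rabs y.
Proof. unfold Rminus. rewrite <- (Rabs_Ropp y). apply Rabs_triang. Qed.

Definition variation (b : nat -> R) (L : nat) : R := ssum (fun m => Rabs (b (S m) - b m)) L.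

Lemma variation_nonneg b L : 0 <= variation b L.
Proof. apply ssum_nonneg; intros; apply Rabs_pos. Qed.

Lemma Rabs_sub_le_variation b L m : (m <= L)%nat -> Rabs (b L - b m) <= variation b L.
Proof.
  induction L as [|L IH]; intros Hm.
  - replace m with 0%nat by lia. unfold variation; simpl.
    rewrite Rminus_diag, Rabs_R0; lra.
  - destruct (Nat.eq_dec m (S L)) as [->|Hne].
    + rewrite Rminus_diag, Rabs_R0. apply variation_nonneg.
    + unfold variation in *; simpl. specialize (IH ltac:(lia)).
      replace (b (S L) - b m) with ((b (S L) - b L) + (b L - b m)) by ring.
      eapply Rle_trans; [apply Rabs_triang|lra].
Qed.

Lemma ssum_by_parts u b L : ssum (fun m => u m * b m) (S L) =
  ssum u (S L) * b L - ssum (fun m => ssum u (S m) * (b (S m) - b m)) L.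
Proof.
  induction L as [|L IH]; [simpl; ring|].
  change (ssum (fun m => u m * b m) (S (S L)))
    with (ssum (fun m => u m * b m) (S L) + u (S L) * b (S L)).
  rewrite IH; simpl; ring.
Qed.

Lemma abel_bound u b L E : (forall t, (t <= L)%nat -> Rabs (ssum u (S t)) <= E) ->
  Rabs (ssum (fun m => u m * b m) (S L)) <= E * (Rabs (b L) + variation b L).
Proof.
  intros H. rewrite ssum_by_parts, Rmult_plus_distr_l.
  eapply Rle_trans; [apply Rabs_sub_le|]. apply Rplus_le_compat.
  - rewrite Rabs_mult. apply Rmult_le_compat_r; [apply Rabs_pos|apply H; lia].
  - unfold variation. rewrite <- ssum_scal.
    eapply Rle_trans; [apply ssum_abs|]. apply ssum_le. intros i Hi.
    rewrite Rabs_mult. apply Rmult_le_compat_r; [apply Rabs_pos|apply H; lia].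
Qed.

Lemma sqr_ssum_le x n : (ssum x n) ^ 2 <= INR n * ssum (fun i => x i ^ 2) n.
Proof.
  induction n as [|n IH]; [simpl ssum; simpl INR; nra|].
  change (ssum x (S n)) with (ssum x n + x n).
  change (ssum (fun i => x i ^ 2) (S n)) with (ssum (fun i => x i ^ 2) n + x n ^ 2).
  rewrite S_INR.
  set (s := ssum x n) in *. set (q := ssum (fun i => x i ^ 2) n) in *.
  assert (Hq : 0 <= q) by (apply ssum_nonneg; intros; apply pow2_ge_0).
  assert (Hn := pos_INR n).
  assert (2 * s * x n <= q + INR n * x n ^ 2).
  { destruct (Req_dec (INR n) 0) as [E|E].
    - rewrite E in IH. assert (s = 0) by nra. subst; nra.
    - assert (0 <= (s - INR n * x n) ^ 2) by apply pow2_ge_0. nra. }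
  nra.
Qed.

Lemma cos_ssum_sin_half x q t : 2 * sin (x / 2) * ssum (fun i => cos (INR (q + i) * x)) t =
  sin (INR (q + t) * x - x / 2) - sin (INR q * x - x / 2).
Proof.
  induction t as [|t IH]; cbn [ssum]; [rewrite Nat.add_0_r, Rminus_diag; ring|].
  rewrite Rmult_plus_distr_l, IH.
  replace (INR (q + S t) * x - x / 2) with (INR (q + t) * x + x / 2)
    by (rewrite Nat.add_succ_r, S_INR; lra).
  rewrite sin_plus, sin_minus. ring.
Qed.

Lemma cos_ssum_bound x q t : 0 < Rabs (sin (x / 2)) ->
  Rabs (ssum (fun i => cos (INR (q + i) * x)) t) <= / Rabs (sin (x / 2)).
Proof.
  intros Hs. apply (Rmult_le_reg_l (2 * Rabs (sin (x / 2)))); [lra|].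
  replace (2 * Rabs (sin (x / 2)) * / Rabs (sin (x / 2))) with 2 by (field; lra).
  rewrite <- (Rabs_right 2) at 1 by lra. rewrite <- !Rabs_mult, cos_ssum_sin_half.
  eapply Rle_trans; [apply Rabs_sub_le|].
  assert (Rabs (sin (INR (q + t) * x - x / 2)) <= 1) by apply Rabs_le, SIN_bound.
  assert (Rabs (sin (INR q * x - x / 2)) <= 1) by apply Rabs_le, SIN_bound. lra.
Qed.

Lemma Rabs_cos_succ_sub x k :
  Rabs (cos (INR (S k) * x) - cos (INR k * x)) <= 2 * Rabs (sin (x / 2)).
Proof.
  replace (INR (S k) * x) with ((INR k * x + x / 2) + x / 2) by (rewrite S_INR; lra).
  replace (INR k * x) with ((INR k * x + x / 2) - x / 2) at 2 by ring.
  rewrite cos_plus, cos_minus.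
  replace (_ - _) with (-2 * sin (INR k * x + x / 2) * sin (x / 2)) by ring.
  rewrite !Rabs_mult, Rabs_left by lra.
  assert (Rabs (sin (INR k * x + x / 2)) <= 1) by apply Rabs_le, SIN_bound.
  assert (0 <= Rabs (sin (x / 2))) by apply Rabs_pos. nra.
Qed.

Lemma variation_cos x q L :
  variation (fun i => cos (INR (q + i) * x)) L <= INR L * (2 * Rabs (sin (x / 2))).
Proof.
  rewrite <- ssum_const. apply ssum_le. intros i _.
  rewrite Nat.add_succ_r. apply Rabs_cos_succ_sub.
Qed.

Lemma ex_series_cauchy (a : nat -> R) : ex_series a ->
  forall eps, 0 < eps -> exists M, forall p m, (M <= p)%nat ->
  Rabs (ssum (fun i => a (p + i)%nat) m) <= eps.
Proof.
  intros [l Hl] eps Heps. change (is_lim_seq (sum_n a) l) in Hl. apply is_lim_seq_spec in Hl.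
  destruct (Hl (mkposreal (eps / 2) ltac:(lra))) as [N HN]; simpl in HN.
  exists (S N). intros p m Hp. destruct p as [|p]; [lia|].
  assert (H1 := HN p ltac:(lia)). assert (H2 := HN (p + m)%nat ltac:(lia)).
  rewrite sum_n_Reals, <- ssum_S_sum_f_R0 in H1, H2.
  replace (ssum (fun i => a (S p + i)%nat) m) with (ssum a (S (p + m)) - ssum a (S p))
    by (rewrite ssum_sub by lia; f_equal; lia).
  replace (ssum a (S (p + m)) - ssum a (S p))
    with ((ssum a (S (p + m)) - l) - (ssum a (S p) - l)) by ring.
  eapply Rle_trans; [apply Rabs_sub_le|lra].
Qed.

Lemma is_lim_seq_0_bounded (a : nat -> R) : is_lim_seq a 0 ->
  exists B, 0 < B /\ forall n, Rabs (a n) <= B.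
Proof.
  intros Hl. apply is_lim_seq_spec in Hl.
  destruct (Hl (mkposreal 1 Rlt_0_1)) as [N HN]; simpl in HN.
  set (f k := Rabs (a k)). assert (Hf : forall k, 0 <= f k) by (intros; apply Rabs_pos).
  exists (1 + ssum f N).
  assert (0 <= ssum f N) by (apply ssum_nonneg; auto).
  split; [lra|]. intros n. destruct (Nat.lt_ge_cases n N) as [Hn|Hn].
  - assert (f n <= ssum f N) by (apply le_ssum_nonneg; auto). unfold f in *; lra.
  - specialize (HN n Hn). rewrite Rminus_0_r in HN. lra.
Qed.

Lemma uniform_cauchy_uniform_limit (g : R -> nat -> R) :
  (forall eps, 0 < eps -> exists M, forall x p m, (M <= p)%nat ->
     Rabs (ssum (fun i => g x (p + i)%nat) m) <= eps) ->
  exists f : R -> R, forall eps, 0 < eps -> exists N0, forall N, (N0 <= N)%nat ->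
     forall x, Rabs (ssum (g x) (S N) - f x) < eps.
Proof.
  intros H.
  assert (Hc : forall x, ex_finite_lim_seq (ssum (g x))).
  { intros x. apply ex_lim_seq_cauchy_corr. intros [e He].
    destruct (H (e / 2) ltac:(lra)) as [M HM]. exists M. intros n m Hn Hm; simpl.
    destruct (Nat.le_ge_cases m n).
    - rewrite ssum_sub by auto. specialize (HM x m (n - m)%nat Hm). lra.
    - rewrite <- Rabs_Ropp, Ropp_minus_distr, ssum_sub by auto.
      specialize (HM x n (m - n)%nat Hn). lra. }
  exists (fun x => real (Lim_seq (ssum (g x)))).
  intros eps Heps. destruct (H (eps / 2) ltac:(lra)) as [M HM].
  exists M. intros N HN x. destruct (Hc x) as [l Hl].
  set (s := ssum (g x) (S N)).
  rewrite (is_lim_seq_unique _ _ Hl); simpl.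
  assert (Hlim : is_lim_seq (fun n => Rabs (ssum (g x) (n + S N)%nat - s)) (Rabs (l - s))).
  { apply (is_lim_seq_abs _ (Finite (l - s))). apply is_lim_seq_minus'.
    - now apply (is_lim_seq_incr_n (ssum (g x)) (S N) l).
    - apply is_lim_seq_const. }
  assert (Hb : forall n, Rabs (ssum (g x) (n + S N)%nat - s) <= eps / 2).
  { intros n. unfold s. rewrite ssum_sub by lia. apply HM. lia. }
  assert (Hle := is_lim_seq_le _ _ _ _ Hb Hlim (is_lim_seq_const (eps / 2))); simpl in Hle.
  rewrite <- Rabs_Ropp, Ropp_minus_distr. lra.
Qed.

Lemma variation_sub b n m : (n <= m)%nat ->
  variation b m - variation b n = variation (fun i => b (n + i)%nat) (m - n).
Proof.
  intros H. unfold variation. rewrite ssum_sub by auto.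
  apply ssum_ext. intros i _. do 3 f_equal. lia.
Qed.

Lemma Rabs_add_variation_nonneg a q L :
  0 <= Rabs (a (q + L)%nat) + variation (fun i => a (q + i)%nat) L.
Proof.
  assert (H := variation_nonneg (fun i => a (q + i)%nat) L).
  assert (H' := Rabs_pos (a (q + L)%nat)). lra.
Qed.

Lemma variation_le b n m : (n <= m)%nat -> variation b n <= variation b m.
Proof. intros H. apply ssum_le_ssum_nonneg; auto. intros; apply Rabs_pos. Qed.

Definition pow2 (j : nat) : nat := (2 ^ j)%nat.

Lemma INR_pow2 j : INR (pow2 j) = 2 ^ j.
Proof. unfold pow2. rewrite pow_INR. reflexivity. Qed.

Lemma pow2_S j : pow2 (S j) = (pow2 j + pow2 j)%nat.
Proof. unfold pow2. rewrite Nat.pow_succ_r'. lia. Qed.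

Lemma pow2_le i j : (i <= j)%nat -> (pow2 i <= pow2 j)%nat.
Proof. intros. apply Nat.pow_le_mono_r; lia. Qed.

Lemma pow2_ge_1 j : (1 <= pow2 j)%nat.
Proof. apply (pow2_le 0). lia. Qed.

Lemma pow2_gt j : (j < pow2 j)%nat.
Proof. apply Nat.pow_gt_lin_r. lia. Qed.

Lemma pow_2_pos j : 0 < 2 ^ j.
Proof. apply pow_lt; lra. Qed.

Lemma pow_2_ge_1 j : 1 <= 2 ^ j.
Proof. apply pow_R1_Rle; lra. Qed.

(* Blocks are the closed ranges [2^j, 2^(j+1)], so that [block_var a j] is exactly the
   left-hand side of the GMS inequality at [n = 2^j]. *)
Definition block_mass (a : nat -> R) (j : nat) : R :=
  ssum (fun i => Rabs (a (pow2 j + i)%nat)) (S (pow2 j)).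

Definition block_var (a : nat -> R) (j : nat) : R :=
  variation (fun i => a (pow2 j + i)%nat) (S (pow2 j)).

Lemma block_mass_nonneg a j : 0 <= block_mass a j.
Proof. apply ssum_nonneg; intros; apply Rabs_pos. Qed.

Lemma block_var_nonneg a j : 0 <= block_var a j.
Proof. apply variation_nonneg. Qed.

Lemma variation_pow2_sub_le a j :
  variation a (pow2 (S j)) - variation a (pow2 j) <= block_var a j.
Proof.
  rewrite variation_sub by (rewrite pow2_S; lia).
  replace (pow2 (S j) - pow2 j)%nat with (pow2 j) by (rewrite pow2_S; lia).
  apply variation_le; lia.
Qed.

Lemma variation_pow2_add_sub_le a j r :
  variation a (pow2 (j + r)) - variation a (pow2 j) <= ssum (fun i => block_var a (j + i)%nat) r.
Proof.
  induction r as [|r IH]; [rewrite Nat.add_0_r; simpl; lra|]. simpl ssum.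
  assert (H := variation_pow2_sub_le a (j + r)).
  rewrite Nat.add_succ_r. lra.
Qed.

Lemma ssum_dyadic_le_blocks g b r : (forall k, 0 <= g k) ->
  ssum (fun i => g (pow2 b + i)%nat) (S (pow2 (b + S r)) - pow2 b) <=
  ssum (fun i => ssum (fun m => g (pow2 (b + i) + m)%nat) (S (pow2 (b + i)))) (S r).
Proof.
  intros Hg. induction r as [|r IH].
  - rewrite Nat.add_1_r, pow2_S.
    replace (S (pow2 b + pow2 b) - pow2 b)%nat with (S (pow2 b)) by lia.
    change (ssum ?F 1) with (0 + F 0%nat); cbv beta. rewrite Nat.add_0_r. lra.
  - assert (Hb := pow2_le b (b + S r) ltac:(lia)).
    set (q := pow2 (b + S r)) in *.
    replace (S (pow2 (b + S (S r))) - pow2 b)%nat with ((S q - pow2 b) + q)%nat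
      by (replace (b + S (S r))%nat with (S (b + S r)) by lia; rewrite pow2_S; fold q; lia).
    rewrite ssum_split. change (ssum ?F (S (S r))) with (ssum F (S r) + F (S r)).
    apply Rplus_le_compat; [exact IH|]. cbv beta. fold q.
    replace (S q) with (1 + q)%nat by lia. rewrite ssum_split.
    assert (0 <= ssum (fun m => g (q + m)%nat) 1) by (apply ssum_nonneg; auto).
    rewrite (ssum_ext _ (fun i => g (q + (1 + i))%nat)); [lra|].
    intros i _. f_equal. lia.
Qed.

Lemma inv_INR_nonneg k : 0 <= / INR k.
Proof.
  destruct k; [simpl; rewrite Rinv_0; lra|].
  apply Rlt_le, Rinv_0_lt_compat, lt_0_INR; lia.
Qed.

Lemma ssum_dyadic_weighted_le a b r :
  ssum (fun i => Rabs (a (pow2 b + i)%nat) / INR (pow2 b + i)) (S (pow2 (b + S r)) - pow2 b) <=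
  ssum (fun i => block_mass a (b + i) / 2 ^ (b + i)) (S r).
Proof.
  eapply Rle_trans.
  { apply (ssum_dyadic_le_blocks (fun k => Rabs (a k) / INR k)).
    intros k. apply Rmult_le_pos; [apply Rabs_pos|apply inv_INR_nonneg]. }
  apply ssum_le. intros i _. unfold block_mass, Rdiv.
  rewrite Rmult_comm, <- ssum_scal. apply ssum_le. intros m _.
  rewrite Rmult_comm. apply Rmult_le_compat_r; [apply Rabs_pos|].
  apply Rinv_le_contravar; [apply pow_2_pos|].
  rewrite <- INR_pow2. apply le_INR. lia.
Qed.

Lemma sqr_ssum_Rabs_le b n E : (forall t, (t <= n)%nat -> Rabs (ssum b (S t)) <= E) ->
  ssum (fun i => Rabs (b i)) (S n) ^ 2 <=
  E * (ssum (fun i => Rabs (b i)) (S n) + 2 * INR (S n) * variation b n).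
Proof.
  intros HE. set (m := ssum (fun i => Rabs (b i)) (S n)). set (W := variation b n).
  assert (HE0 : 0 <= E) by (eapply Rle_trans; [apply Rabs_pos|apply (HE 0%nat); lia]).
  assert (HW : 0 <= W) by apply variation_nonneg.
  assert (Hn := pos_INR (S n)).
  assert (Habel : Rabs (ssum (fun i => b i * b i) (S n)) <= E * (Rabs (b n) + W))
    by now apply abel_bound.
  assert (Hcs : m ^ 2 <= INR (S n) * Rabs (ssum (fun i => b i * b i) (S n))).
  { unfold m. eapply Rle_trans; [apply sqr_ssum_le|]. apply Rmult_le_compat_l; [lra|].
    rewrite Rabs_right.
    - right. apply ssum_ext. intros i _. rewrite pow2_abs. ring.
    - apply Rle_ge, ssum_nonneg. intros; apply Rle_0_sqr. }
  (* the last term is controlled by the average of |b| plus the variation *)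
  assert (Hlast : INR (S n) * Rabs (b n) <= m + INR (S n) * W).
  { rewrite <- !ssum_const. unfold m. rewrite <- ssum_plus. apply ssum_le. intros i Hi.
    assert (Hd := Rabs_sub_le_variation b n i ltac:(lia)). fold W in Hd.
    replace (b n) with (b i + (b n - b i)) by ring.
    eapply Rle_trans; [apply Rabs_triang|lra]. }
  apply Rle_trans with (INR (S n) * (E * (Rabs (b n) + W))).
  - eapply Rle_trans; [exact Hcs|]. apply Rmult_le_compat_l; [lra|exact Habel].
  - replace (INR (S n) * (E * (Rabs (b n) + W)))
      with (E * (INR (S n) * Rabs (b n) + INR (S n) * W)) by ring.
    apply Rmult_le_compat_l; [exact HE0|]. nra.
Qed.

Lemma block_mass_sqr_le a j E :
  (forall t, (t <= pow2 j)%nat -> Rabs (ssum (fun i => a (pow2 j + i)%nat) (S t)) <= E) ->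
  block_mass a j ^ 2 <= E * (block_mass a j + 2 * INR (S (pow2 j)) * block_var a j).
Proof.
  intros HE. assert (HE0 : 0 <= E) by (eapply Rle_trans; [apply Rabs_pos|apply (HE 0%nat); lia]).
  eapply Rle_trans; [apply (sqr_ssum_Rabs_le (fun i => a (pow2 j + i)%nat)); exact HE|].
  apply Rmult_le_compat_l; [exact HE0|]. apply Rplus_le_compat_l.
  apply Rmult_le_compat_l; [assert (H := pos_INR (S (pow2 j))); lra|].
  apply variation_le; lia.
Qed.

Lemma sum_f_R0_le_window f lo hi N : (forall k, 0 <= f k) ->
  (forall k, (k < lo)%nat \/ (hi < k)%nat -> f k = 0) -> (lo <= hi)%nat ->
  sum_f_R0 f N <= ssum (fun i => f (lo + i)%nat) (S hi - lo).
Proof.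
  intros Hf Hout Hlh. rewrite <- ssum_S_sum_f_R0.
  assert (Hhi : ssum f (S N) <= ssum f (S hi)).
  { destruct (le_lt_dec (S N) (S hi)); [apply ssum_le_ssum_nonneg; auto|].
    replace (S N) with (S hi + (S N - S hi))%nat by lia. rewrite ssum_split.
    rewrite (ssum_ext (fun i => f (S hi + i)%nat) (fun _ => 0)), ssum_const; [lra|].
    intros; apply Hout; lia. }
  replace (S hi) with (lo + (S hi - lo))%nat in Hhi by lia. rewrite ssum_split in Hhi.
  rewrite (ssum_ext f (fun _ => 0) lo), ssum_const in Hhi; [lra|]. intros; apply Hout; lia.
Qed.

Lemma gms_rhs_term_nonneg a lam n k : 0 <= gms_rhs_term a lam n k.
Proof.
  unfold gms_rhs_term. destruct (Rle_dec _ _); [destruct (Rle_dec _ _)|]; try lra.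
  apply Rmult_le_pos; [apply Rabs_pos|apply inv_INR_nonneg].
Qed.

Lemma gms_rhs_term_le a lam n k : gms_rhs_term a lam n k <= Rabs (a k) / INR k.
Proof.
  unfold gms_rhs_term. destruct (Rle_dec _ _); [destruct (Rle_dec _ _)|]; try lra;
  apply Rmult_le_pos; apply Rabs_pos || apply inv_INR_nonneg.
Qed.

Lemma gms_rhs_term_pow2_outside a lam K j k : 0 < lam -> lam <= 2 ^ K -> (K <= j)%nat ->
  (k < pow2 (j - K))%nat \/ (pow2 (j + K) < k)%nat -> gms_rhs_term a lam (pow2 j) k = 0.
Proof.
  intros Hlam HlamK HKj Hk. unfold gms_rhs_term.
  destruct (Rle_dec _ _) as [Hlo|]; [|reflexivity].
  destruct (Rle_dec _ _) as [Hhi|]; [|reflexivity].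
  exfalso. rewrite INR_pow2 in Hlo, Hhi.
  assert (HjK : 2 ^ j = 2 ^ (j - K) * 2 ^ K) by (rewrite <- pow_add; f_equal; lia).
  assert (H1 := pow_2_pos (j - K)). assert (H2 := pow_2_pos j).
  destruct Hk as [Hk|Hk]; apply lt_INR in Hk; rewrite INR_pow2 in Hk.
  - assert (2 ^ (j - K) <= 2 ^ j / lam); [|lra].
    apply (Rmult_le_reg_r lam); [lra|]. unfold Rdiv.
    rewrite Rmult_assoc, Rinv_l, HjK by lra. nra.
  - rewrite pow_add in Hk. nra.
Qed.


Lemma exists_pow_2_gt B : exists t, B < 2 ^ t.
Proof.
  destruct (Pow_x_infinity 2 ltac:(rewrite Rabs_right; lra) (B + 1)) as [t Ht].
  exists t. specialize (Ht t (Nat.le_refl t)).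
  rewrite Rabs_right in Ht by (apply Rle_ge, Rlt_le, pow_2_pos). lra.
Qed.

Lemma exists_max_index (f : nat -> R) n : (0 < n)%nat ->
  exists i, (i < n)%nat /\ forall k, (k < n)%nat -> f k <= f i.
Proof.
  induction n as [|n IH]; intros Hn; [lia|]. destruct (Nat.eq_dec n 0) as [->|Hn0].
  - exists 0%nat. split; [lia|]. intros k Hk. replace k with 0%nat by lia. lra.
  - destruct (IH ltac:(lia)) as [i [Hi Hmax]]. destruct (Rle_dec (f i) (f n)).
    + exists n. split; [lia|]. intros k Hk.
      destruct (Nat.eq_dec k n) as [->|]; [lra|]. specialize (Hmax k ltac:(lia)). lra.
    + exists i. split; [lia|]. intros k Hk.
      destruct (Nat.eq_dec k n) as [->|]; [lra|]. apply Hmax; lia.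
Qed.

Section Growth.

Variables (y : nat -> R) (J0 K : nat) (G : R).
Hypotheses (Hy0 : forall i, 0 <= y i) (HG : 1 <= G) (Hsmall : forall i, (i < J0)%nat -> y i <= G)
  (Hstep : forall j, (J0 <= j)%nat -> exists i, (i < j + K)%nat /\ y j ^ 2 <= / 2 ^ (K + 1) * y i).

(* Once [y j > G >= 1], every later value reached by [Hstep] exceeds [1], so each step
   multiplies the value by at least [2^(K+1)] while advancing the index by less than [K]. *)
Lemma sqr_step_chain j : G < y j ->
  forall s, exists i, (i <= j + s * K)%nat /\ y j * (2 ^ (K + 1)) ^ s <= y i.
Proof.
  intros Hj s. assert (HQ := pow_2_ge_1 (K + 1)). set (Q := 2 ^ (K + 1)) in *.
  induction s as [|s [i [Hi Hyi]]]; [exists j; split; [lia|simpl; lra]|].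
  assert (HQs : 1 <= Q ^ s) by (apply pow_R1_Rle; lra).
  assert (Hji : y j <= y i) by nra.
  assert (HiJ : (J0 <= i)%nat).
  { destruct (Nat.lt_ge_cases i J0) as [Hlt|]; auto. specialize (Hsmall i Hlt). lra. }
  destruct (Hstep i HiJ) as [i' [Hi' Hsq]]. exists i'. split; [lia|].
  assert (Q * y i ^ 2 <= y i').
  { apply (Rmult_le_reg_l (/ Q)); [apply Rinv_0_lt_compat; lra|].
    rewrite <- Rmult_assoc, Rinv_l by lra. lra. }
  assert (Q * y i <= Q * y i ^ 2) by (apply Rmult_le_compat_l; nra).
  assert (Q * (y j * Q ^ s) <= Q * y i) by (apply Rmult_le_compat_l; lra).
  rewrite <- tech_pow_Rmult. nra.
Qed.

Lemma bounded_of_sqr_step B : (forall i, y i <= 2 ^ (i + 1) * B) -> forall j, y j <= G.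
Proof.
  intros Hexp j. destruct (Rle_dec (y j) G) as [|Hj]; auto. exfalso. apply Rnot_le_lt in Hj.
  destruct (exists_pow_2_gt (2 ^ (j + 1) * B)) as [s Hs].
  destruct (sqr_step_chain j Hj s) as [i [Hi Hyi]].
  assert (Hmono : 2 ^ (i + 1) <= 2 ^ (s * K) * 2 ^ (j + 1))
    by (rewrite <- pow_add; apply Rle_pow; [lra|lia]).
  rewrite <- pow_mult, Nat.mul_add_distr_r, Nat.mul_1_l, pow_add, Nat.mul_comm in Hyi.
  assert (HsK := pow_2_pos (s * K)). assert (Hj1 := pow_2_pos (j + 1)).
  assert (HB : 0 <= B)
    by (assert (H := Rle_trans _ _ _ (Hy0 0%nat) (Hexp 0%nat)); simpl in H; lra).
  assert (H : 2 ^ (s * K) * (y j * 2 ^ s) <= 2 ^ (s * K) * (2 ^ (j + 1) * B)).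
  { rewrite <- (Rmult_assoc (2 ^ (s * K))), (Rmult_comm (2 ^ (s * K)) (y j)), Rmult_assoc.
    eapply Rle_trans; [exact Hyi|]. eapply Rle_trans; [apply Hexp|].
    rewrite <- Rmult_assoc. apply Rmult_le_compat_r; [exact HB|exact Hmono]. }
  apply Rmult_le_reg_l in H; [|exact HsK].
  assert (2 ^ s <= y j * 2 ^ s) by (assert (Hs0 := pow_2_pos s); nra). lra.
Qed.

End Growth.

Lemma ssum_inv_pow_2_le j r : ssum (fun i => / 2 ^ (j + i)) r <= 2 / 2 ^ j.
Proof.
  assert (Hgeom : ssum (fun i => / 2 ^ (j + i)) r + 2 / 2 ^ (j + r) = 2 / 2 ^ j).
  { induction r as [|r IH]; [rewrite Nat.add_0_r; simpl; ring|]. simpl ssum.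
    rewrite Nat.add_succ_r. simpl pow. assert (H := pow_2_pos (j + r)).
    rewrite <- IH. field. lra. }
  assert (0 <= 2 / 2 ^ (j + r)) by (apply Rlt_le, Rdiv_lt_0_compat, pow_2_pos; lra). lra.
Qed.

Lemma Rabs_le_Rabs_variation a n N : (n <= N)%nat ->
  Rabs (a n) <= Rabs (a N) + (variation a N - variation a n).
Proof.
  intros H. rewrite variation_sub by exact H.
  assert (Hd := Rabs_sub_le_variation (fun i => a (n + i)%nat) (N - n) 0 ltac:(lia)).
  cbv beta in Hd. replace (n + (N - n))%nat with N in Hd by lia. rewrite Nat.add_0_r in Hd.
  replace (a n) with (a N - (a N - a n)) by ring.
  eapply Rle_trans; [apply Rabs_sub_le|lra].
Qed.
Section GMS_blocks.

Variables (a : nat -> R) (C lam : R) (K : nat).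

Definition gms_ineq : Prop := forall n : nat, (1 <= n)%nat ->
  sum_f_R0 (fun j => Rabs (a (n + j)%nat - a (n + j + 1)%nat)) n
  <= C * sum_f_R0 (gms_rhs_term a lam n) (Z.to_nat (up (lam * INR n))).

Hypotheses (HC : 0 < C) (Hlam : 0 < lam) (HlamK : lam <= 2 ^ K) (HK : (1 <= K)%nat)
  (Hgms : gms_ineq).

Lemma block_var_le j : (K <= j)%nat ->
  block_var a j <= C * ssum (fun i => block_mass a (j - K + i) / 2 ^ (j - K + i)) (2 * K).
Proof.
  intros HKj. assert (Hg := Hgms (pow2 j) (pow2_ge_1 j)).
  replace (sum_f_R0 _ (pow2 j)) with (block_var a j) in Hg.
  2:{ unfold block_var, variation. rewrite <- ssum_S_sum_f_R0. apply ssum_ext. intros i _.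
      rewrite Rabs_minus_sym. do 3 f_equal. lia. }
  eapply Rle_trans; [exact Hg|]. apply Rmult_le_compat_l; [lra|].
  eapply Rle_trans.
  { apply (sum_f_R0_le_window _ (pow2 (j - K)) (pow2 (j + K))).
    - intros; apply gms_rhs_term_nonneg.
    - intros k Hk. now apply (gms_rhs_term_pow2_outside a lam K).
    - apply pow2_le; lia. }
  eapply Rle_trans; [apply ssum_le; intros; apply gms_rhs_term_le|].
  replace (2 * K)%nat with (S (2 * K - 1)) by lia.
  replace (j + K)%nat with (j - K + S (2 * K - 1))%nat by lia.
  apply ssum_dyadic_weighted_le.
Qed.

Definition block_const : R := 8 * C * INR K * 2 ^ K.

Lemma block_const_nonneg : 0 <= block_const.
Proof.
  unfold block_const. assert (0 <= INR K) by apply pos_INR. assert (0 < 2 ^ K) by apply pow_2_pos.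
  assert (0 <= C * INR K) by nra. nra.
Qed.

Lemma block_var_weighted_le_max j Y : (K <= j)%nat ->
  (forall r, (r < 2 * K)%nat -> block_mass a (j - K + r) <= Y) ->
  2 * INR (S (pow2 j)) * block_var a j <= block_const * Y.
Proof.
  intros HKj HY. set (q := 2 ^ (j - K)). assert (Hq : 0 < q) by apply pow_2_pos.
  assert (HY0 : 0 <= Y)
    by (eapply Rle_trans; [apply block_mass_nonneg|apply (HY 0%nat); lia]).
  assert (Hsum : ssum (fun r => block_mass a (j - K + r) / 2 ^ (j - K + r)) (2 * K)
                 <= INR (2 * K) * (Y / q)).
  { rewrite <- ssum_const. apply ssum_le. intros r Hr. unfold Rdiv.
    apply Rmult_le_compat; [apply block_mass_nonneg|apply Rlt_le, Rinv_0_lt_compat, pow_2_pos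
      |apply HY, Hr|].
    apply Rinv_le_contravar; [exact Hq|]. apply Rle_pow; [lra|lia]. }
  assert (HS : INR (S (pow2 j)) <= 2 * (q * 2 ^ K)).
  { rewrite S_INR, INR_pow2. unfold q. rewrite <- pow_add.
    replace (j - K + K)%nat with j by lia. assert (H := pow_2_ge_1 j). lra. }
  assert (HV := block_var_le j HKj). assert (HV0 := block_var_nonneg a j).
  apply Rle_trans with (2 * (2 * (q * 2 ^ K)) * (C * (INR (2 * K) * (Y / q)))).
  - apply Rmult_le_compat; [assert (H := pos_INR (S (pow2 j))); lra|exact HV0|lra|].
    eapply Rle_trans; [exact HV|]. apply Rmult_le_compat_l; [lra|exact Hsum].
  - rewrite mult_INR. right. unfold block_const. simpl INR. field. lra.
Qed.

Lemma block_mass_sqr_step j E : (K <= j)%nat ->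
  (forall t, (t <= pow2 j)%nat -> Rabs (ssum (fun i => a (pow2 j + i)%nat) (S t)) <= E) ->
  exists i, (i < j + K)%nat /\ block_mass a j ^ 2 <= E * (1 + block_const) * block_mass a i.
Proof.
  intros HKj HE.
  assert (HE0 : 0 <= E) by (eapply Rle_trans; [apply Rabs_pos|apply (HE 0%nat); lia]).
  destruct (exists_max_index (fun r => block_mass a (j - K + r)) (2 * K) ltac:(lia))
    as [r [Hr Hmax]].
  exists (j - K + r)%nat. split; [lia|].
  set (Y := block_mass a (j - K + r)) in *.
  assert (Hj : block_mass a j <= Y)
    by (specialize (Hmax K ltac:(lia)); replace (j - K + K)%nat with j in Hmax by lia; exact Hmax).
  assert (HV := block_var_weighted_le_max j Y HKj Hmax).
  eapply Rle_trans; [apply block_mass_sqr_le, HE|].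
  replace (E * (1 + block_const) * Y) with (E * (Y + block_const * Y)) by ring.
  apply Rmult_le_compat_l; [exact HE0|lra].
Qed.

Hypotheses (Ha0 : is_lim_seq a 0) (Hser : ex_series a).

Lemma block_mass_sqr_step_eventually E : 0 < E -> exists J, forall j, (J <= j)%nat ->
  exists i, (i < j + K)%nat /\ block_mass a j ^ 2 <= E * (1 + block_const) * block_mass a i.
Proof.
  intros HE. destruct (ex_series_cauchy a Hser E HE) as [M HM].
  exists (M + K)%nat. intros j Hj. apply block_mass_sqr_step; [lia|].
  intros t _. apply HM. assert (H := pow2_gt j). lia.
Qed.

Lemma block_mass_bounded : exists G, 1 <= G /\ forall j, block_mass a j <= G.
Proof.
  destruct (is_lim_seq_0_bounded a Ha0) as [B [HB Hab]].
  assert (HD := block_const_nonneg).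
  destruct (block_mass_sqr_step_eventually (/ 2 ^ (K + 1) / (1 + block_const))) as [J0 HJ0].
  { apply Rdiv_lt_0_compat; [apply Rinv_0_lt_compat, pow_2_pos|lra]. }
  set (G := 1 + ssum (block_mass a) J0).
  assert (HJ : 0 <= ssum (block_mass a) J0) by (apply ssum_nonneg; intros; apply block_mass_nonneg).
  exists G. split; [unfold G; lra|].
  apply (bounded_of_sqr_step _ J0 K G) with B.
  - apply block_mass_nonneg.
  - unfold G; lra.
  - intros i Hi. assert (block_mass a i <= ssum (block_mass a) J0)
      by (apply le_ssum_nonneg; auto; apply block_mass_nonneg). unfold G; lra.
  - intros j Hj. destruct (HJ0 j Hj) as [i [Hi Hy]]. exists i. split; [exact Hi|].
    replace (/ 2 ^ (K + 1) / (1 + block_const) * (1 + block_const)) with (/ 2 ^ (K + 1)) in Hy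
      by (unfold Rdiv; rewrite Rmult_assoc, Rinv_l, Rmult_1_r; lra).
    exact Hy.
  - intros i. unfold block_mass.
    eapply Rle_trans; [apply (ssum_le _ (fun _ => B)); intros; apply Hab|].
    rewrite ssum_const, S_INR, INR_pow2, pow_add. assert (H := pow_2_ge_1 i). simpl. nra.
Qed.

Lemma block_mass_vanishes eta : 0 < eta ->
  exists J, forall j, (J <= j)%nat -> block_mass a j <= eta.
Proof.
  intros Heta. destruct block_mass_bounded as [G [HG HGb]]. assert (HD := block_const_nonneg).
  destruct (block_mass_sqr_step_eventually (eta ^ 2 / ((1 + block_const) * G))) as [J HJ].
  { apply Rdiv_lt_0_compat; nra. }
  exists J. intros j Hj. destruct (HJ j Hj) as [i [_ Hy]].
  assert (Hi := HGb i). assert (Hi0 := block_mass_nonneg a i).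
  assert (Hj0 := block_mass_nonneg a j).
  assert (eta ^ 2 / ((1 + block_const) * G) * (1 + block_const) * block_mass a i <= eta ^ 2).
  { replace (eta ^ 2 / ((1 + block_const) * G) * (1 + block_const) * block_mass a i)
      with (eta ^ 2 * (block_mass a i / G)) by (field; lra).
    assert (block_mass a i / G <= 1) by (apply (Rmult_le_reg_r G); [lra|];
        unfold Rdiv; rewrite Rmult_assoc, Rinv_l; lra).
    assert (0 <= eta ^ 2) by nra. nra. }
  nra.
Qed.

Section Small_blocks.

Variables (Jy : nat) (eta : R).
Hypotheses (Heta : 0 < eta) (Hsmall : forall i, (Jy <= i)%nat -> block_mass a i <= eta).

Lemma block_var_small j : (Jy + K <= j)%nat -> block_var a j <= block_const / 2 * eta / 2 ^ j.
Proof.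
  intros Hj.
  assert (HV := block_var_weighted_le_max j eta ltac:(lia)
                  (fun r _ => Hsmall (j - K + r) ltac:(lia))).
  assert (HS : 2 ^ j <= INR (S (pow2 j))) by (rewrite S_INR, INR_pow2; lra).
  assert (H2 := pow_2_pos j). assert (HV0 := block_var_nonneg a j).
  apply (Rmult_le_reg_l (2 * 2 ^ j)); [lra|].
  replace (2 * 2 ^ j * (block_const / 2 * eta / 2 ^ j)) with (block_const * eta) by (field; lra).
  assert (HB := block_const_nonneg). nra.
Qed.

Lemma variation_dyadic_tail_le j r : (Jy + K <= j)%nat ->
  variation a (pow2 (j + r)) - variation a (pow2 j) <= block_const * eta / 2 ^ j.
Proof.
  intros Hj.
  eapply Rle_trans; [apply variation_pow2_add_sub_le|].
  eapply Rle_trans.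
  { apply (ssum_le _ (fun i => block_const / 2 * eta * / 2 ^ (j + i))). intros i _.
    apply block_var_small. lia. }
  rewrite ssum_scal. assert (HA := block_const_nonneg).
  eapply Rle_trans; [apply Rmult_le_compat_l; [|apply ssum_inv_pow_2_le]; nra|].
  right. field. apply pow_nonzero. lra.
Qed.

Lemma tail_variation_le p L j : (Jy + K <= j)%nat -> (pow2 j <= p)%nat ->
  Rabs (a (p + L)%nat) + variation (fun i => a (p + i)%nat) L <= (1 + block_const) * eta / 2 ^ j.
Proof.
  intros Hj Hp. assert (H2 := pow_2_pos j). apply is_lim_seq_spec in Ha0.
  destruct (Ha0 (mkposreal (eta / 2 ^ j) (Rdiv_lt_0_compat _ _ Heta H2))) as [N0 HN0].
  simpl in HN0. set (r := (p + L + N0)%nat). set (N := pow2 (j + r)).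
  assert (HN : (p + L + N0 <= N)%nat) by (assert (H := pow2_gt (j + r)); unfold N, r in *; lia).
  assert (HaN : Rabs (a N) <= eta / 2 ^ j)
    by (specialize (HN0 N ltac:(lia)); rewrite Rminus_0_r in HN0; lra).
  assert (Hend := Rabs_le_Rabs_variation a (p + L) N ltac:(lia)).
  assert (Hvar := variation_sub a p (p + L) ltac:(lia)).
  replace (p + L - p)%nat with L in Hvar by lia.
  assert (Hstart := variation_le a (pow2 j) p Hp).
  assert (Htail := variation_dyadic_tail_le j r Hj).
  replace ((1 + block_const) * eta / 2 ^ j) with (eta / 2 ^ j + block_const * eta / 2 ^ j)
    by (field; lra).
  fold N in Htail. lra.
Qed.

End Small_blocks.

Lemma weighted_tail_variation_vanishes eps : 0 < eps -> exists M, forall p L, (M <= p)%nat ->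
  INR p * (Rabs (a (p + L)%nat) + variation (fun i => a (p + i)%nat) L) <= eps.
Proof.
  intros Heps. assert (HB := block_const_nonneg).
  set (eta := eps / (2 * (1 + block_const))).
  assert (Heta : 0 < eta) by (apply Rdiv_lt_0_compat; lra).
  destruct (block_mass_vanishes eta Heta) as [Jy HJy].
  exists (pow2 (Jy + K)). intros p L Hp.
  assert (Hp0 : (0 < p)%nat) by (assert (H := pow2_ge_1 (Jy + K)); lia).
  destruct (Nat.log2_spec p Hp0) as [Hlo Hhi]. set (j := Nat.log2 p) in *.
  assert (Hj : (Jy + K <= j)%nat)
    by (unfold j; rewrite <- (Nat.log2_pow2 (Jy + K)) by lia; now apply Nat.log2_le_mono).
  assert (HP : INR p <= 2 * 2 ^ j).
  { apply lt_INR in Hhi. rewrite pow_INR in Hhi. simpl in Hhi.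
    replace (1 + 1) with 2 in Hhi by ring. lra. }
  assert (Htail := tail_variation_le Jy eta Heta HJy p L j Hj Hlo).
  assert (H2 := pow_2_pos j).
  assert (Htail0 := Rabs_add_variation_nonneg a p L).
  apply Rle_trans with (2 * 2 ^ j * ((1 + block_const) * eta / 2 ^ j)).
  - apply Rmult_le_compat; [apply pos_INR|exact Htail0|exact HP|exact Htail].
  - right. unfold eta. field. lra.
Qed.

End GMS_blocks.

Lemma gms_dyadic (a : nat -> R) : GMS a ->
  exists C lam K, 0 < C /\ 0 < lam /\ lam <= 2 ^ K /\ (1 <= K)%nat /\ gms_ineq a C lam.
Proof.
  intros [_ [C [lam [HC [Hlam Hgms]]]]]. destruct (exists_pow_2_gt lam) as [t Ht].
  exists C, lam, (S t). repeat split; try lra; try lia; [|exact Hgms].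
  simpl. assert (H := pow_2_pos t). lra.
Qed.

Lemma cos_tail_low_freq a x q c E : (forall m, Rabs (ssum (fun i => a (q + i)%nat) m) <= E) ->
  Rabs (ssum (fun i => a (q + i)%nat * cos (INR (q + i) * x)) c)
  <= E * (1 + 2 * Rabs (sin (x / 2)) * INR c).
Proof.
  intros HE. assert (HE0 : 0 <= E) by (eapply Rle_trans; [apply Rabs_pos|apply (HE 0%nat)]).
  assert (Hs := Rabs_pos (sin (x / 2))).
  destruct c as [|L]; [simpl; rewrite Rabs_R0; nra|].
  eapply Rle_trans; [apply abel_bound; intros; apply HE|].
  apply Rmult_le_compat_l; [exact HE0|].
  assert (Rabs (cos (INR (q + L) * x)) <= 1) by apply Rabs_le, COS_bound.
  assert (Hv := variation_cos x q L). rewrite S_INR. nra.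
Qed.

Lemma cos_tail_high_freq a x q L : 0 < Rabs (sin (x / 2)) ->
  Rabs (ssum (fun i => a (q + i)%nat * cos (INR (q + i) * x)) (S L))
  <= / Rabs (sin (x / 2)) * (Rabs (a (q + L)%nat) + variation (fun i => a (q + i)%nat) L).
Proof.
  intros Hs. rewrite (ssum_ext _ (fun i => cos (INR (q + i) * x) * a (q + i)%nat))
    by (intros; apply Rmult_comm).
  apply (abel_bound (fun i => cos (INR (q + i) * x)) (fun i => a (q + i)%nat)).
  intros t _. now apply cos_ssum_bound.
Qed.

Lemma cos_tail_le a x p m E T :
  (forall c, Rabs (ssum (fun i => a (p + i)%nat) c) <= E) ->
  (forall q L, (p <= q)%nat ->
     INR q * (Rabs (a (q + L)%nat) + variation (fun i => a (q + i)%nat) L) <= T) ->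
  Rabs (ssum (fun i => a (p + i)%nat * cos (INR (p + i) * x)) m) <= 5 * E + T.
Proof.
  intros HE HT. set (s := Rabs (sin (x / 2))).
  assert (Hs0 : 0 <= s) by apply Rabs_pos. assert (Hs1 : s <= 1) by apply Rabs_le, SIN_bound.
  assert (HE0 : 0 <= E) by (eapply Rle_trans; [apply Rabs_pos|apply (HE 0%nat)]).
  assert (HT0 : 0 <= T).
  { eapply Rle_trans; [|apply (HT p 0%nat); lia].
    apply Rmult_le_pos; [apply pos_INR|apply Rabs_add_variation_nonneg]. }
  assert (Hlow := fun c => cos_tail_low_freq a x p c E HE). fold s in Hlow.
  destruct (Req_dec s 0) as [Hs|Hs].
  { specialize (Hlow m). rewrite Hs in Hlow. lra. }
  assert (Hsp : 0 < s) by lra.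
  (* split the sum at the frequency [z ~ 1/s]: below it the cosines vary slowly, above it
     the Dirichlet kernel is bounded by [1/s <= z] *)
  destruct (archimed (/ s)) as [Hz1 Hz2]. set (z := Z.to_nat (up (/ s))).
  assert (Hz : INR z = IZR (up (/ s))).
  { unfold z. rewrite INR_IZR_INZ, Z2Nat.id; [reflexivity|].
    apply le_IZR. assert (0 < / s) by (apply Rinv_0_lt_compat, Hsp). lra. }
  set (c := Nat.min m z). replace m with (c + (m - c))%nat by lia.
  rewrite ssum_split. eapply Rle_trans; [apply Rabs_triang|]. apply Rplus_le_compat.
  - eapply Rle_trans; [apply Hlow|].
    assert (Hc : INR c <= / s + 1) by (assert (H := le_INR c z ltac:(lia)); lra).
    assert (s * INR c <= s * (/ s + 1)) by (apply Rmult_le_compat_l; lra).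
    assert (s * / s = 1) by (field; lra). nra.
  - destruct (m - c)%nat as [|L] eqn:Em; [simpl; rewrite Rabs_R0; lra|].
    assert (Hc : c = z) by lia. set (q := (p + c)%nat).
    rewrite (ssum_ext _ (fun i => a (q + i)%nat * cos (INR (q + i) * x)))
      by (intros; unfold q; rewrite Nat.add_assoc; reflexivity).
    eapply Rle_trans; [apply cos_tail_high_freq, Hsp|]. fold s.
    assert (HX0 := Rabs_add_variation_nonneg a q L).
    assert (Hq : / s <= INR q)
      by (unfold q; rewrite plus_INR, Hc, Hz; assert (H := pos_INR p); lra).
    assert (H := Rmult_le_compat_r _ _ _ HX0 Hq). assert (HX := HT q L ltac:(unfold q; lia)). lra.
Qed.

Lemma cos_tail_uniformly_small (a : nat -> R) : ex_series a ->
  (forall eps, 0 < eps -> exists M, forall p L, (M <= p)%nat ->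
     INR p * (Rabs (a (p + L)%nat) + variation (fun i => a (p + i)%nat) L) <= eps) ->
  forall eps, 0 < eps -> exists M, forall x p m, (M <= p)%nat ->
    Rabs (ssum (fun i => a (p + i)%nat * cos (INR (p + i) * x)) m) <= eps.
Proof.
  intros Hser Htail eps Heps.
  destruct (ex_series_cauchy a Hser (eps / 10) ltac:(lra)) as [M1 HM1].
  destruct (Htail (eps / 2) ltac:(lra)) as [M2 HM2].
  exists (M1 + M2)%nat. intros x p m Hp.
  replace eps with (5 * (eps / 10) + eps / 2) by field.
  apply cos_tail_le; intros; [apply HM1|apply HM2]; lia.
Qed.

Definition cos_partial_unif_cvg (a : nat -> R) : Prop :=
  exists f : R -> R, forall eps : R, 0 < eps ->
    exists N0 : nat, forall N : nat, (N0 <= N)%nat ->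
      forall x : R, Rabs (cos_partial a N x - f x) < eps.

Lemma cos_partial_ssum a N x : cos_partial a N x = ssum (fun n => a n * cos (INR n * x)) (S N).
Proof. unfold cos_partial. now rewrite ssum_S_sum_f_R0. Qed.

Lemma cos_partial_unif_cvg_of_ex_series a : GMS a -> ex_series a -> cos_partial_unif_cvg a.
Proof.
  intros Ha Hser. assert (Ha0 : is_lim_seq a 0) by apply Ha.
  destruct (gms_dyadic a Ha) as [C [lam [K [HC [Hlam [HlamK [HK Hgms]]]]]]].
  assert (Htail := weighted_tail_variation_vanishes a C lam K HC Hlam HlamK HK Hgms Ha0 Hser).
  destruct (uniform_cauchy_uniform_limit (fun x n => a n * cos (INR n * x))
              (cos_tail_uniformly_small a Hser Htail)) as [f Hf].
  exists f. intros eps Heps. destruct (Hf eps Heps) as [N0 HN0].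
  exists N0. intros N HN x. rewrite cos_partial_ssum. now apply HN0.
Qed.

Lemma is_series_of_cos_partial_unif_cvg a f :
  (forall eps : R, 0 < eps -> exists N0 : nat, forall N : nat, (N0 <= N)%nat ->
     forall x : R, Rabs (cos_partial a N x - f x) < eps) ->
  forall x, is_series (fun n => a n * cos (INR n * x)) (f x).
Proof.
  intros Hf x. change (is_lim_seq (sum_n (fun n => a n * cos (INR n * x))) (f x)).
  apply is_lim_seq_spec. intros [eps Heps].
  destruct (Hf eps Heps) as [N0 HN0]. exists N0. intros N HN.
  rewrite sum_n_Reals. apply (HN0 N HN x).
Qed.

Lemma Rabs_cos_partial_le a N x :
  Rabs (cos_partial a N x) <= ssum (fun n => Rabs (a n)) (S N).
Proof.
  rewrite cos_partial_ssum. eapply Rle_trans; [apply ssum_abs|]. apply ssum_le. intros i _.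
  rewrite Rabs_mult. assert (Rabs (cos (INR i * x)) <= 1) by apply Rabs_le, COS_bound.
  assert (0 <= Rabs (a i)) by apply Rabs_pos. nra.
Qed.

Lemma limit_bounded_of_cos_partial_unif_cvg a f :
  (forall eps : R, 0 < eps -> exists N0 : nat, forall N : nat, (N0 <= N)%nat ->
     forall x : R, Rabs (cos_partial a N x - f x) < eps) ->
  exists M, forall x, Rabs (f x) <= M.
Proof.
  intros Hf. destruct (Hf 1 Rlt_0_1) as [N0 HN0].
  exists (ssum (fun n => Rabs (a n)) (S N0) + 1). intros x.
  assert (H := HN0 N0 (Nat.le_refl N0) x). assert (Hb := Rabs_cos_partial_le a N0 x).
  assert (Habs := Rabs_sub_le (cos_partial a N0 x) (cos_partial a N0 x - f x)).
  replace (cos_partial a N0 x - (cos_partial a N0 x - f x)) with (f x) in Habs by ring. lra.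
Qed.

Lemma ex_series_of_cos_series a :
  (forall x, ex_series (fun n => a n * cos (INR n * x))) -> ex_series a.
Proof.
  intros H. destruct (H 0) as [l Hl]. exists l. eapply is_series_ext; [|exact Hl].
  intros n. simpl. rewrite Rmult_0_r, cos_0. ring.
Qed.

Theorem theorem3 (a : nat -> R) (Ha : GMS a) :
  (* (i) <-> (ii) *)
  (ex_series a <->
   exists f : R -> R, forall eps : R, 0 < eps ->
     exists N0 : nat, forall N : nat, (N0 <= N)%nat ->
       forall x : R, Rabs (cos_partial a N x - f x) < eps)
  /\
  (* (ii) <-> (iii) *)
  ((exists f : R -> R, forall eps : R, 0 < eps ->
     exists N0 : nat, forall N : nat, (N0 <= N)%nat ->
       forall x : R, Rabs (cos_partial a N x - f x) < eps) <->
   ((forall x : R, ex_series (fun n => a n * cos (INR n * x))) /\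
    exists M : R, forall x : R,
      Rabs (Series (fun n => a n * cos (INR n * x))) <= M)).
Proof.
  split; split.
  - now apply cos_partial_unif_cvg_of_ex_series.
  - intros [f Hf]. apply ex_series_of_cos_series. intros x.
    exists (f x). now apply is_series_of_cos_partial_unif_cvg.
  - intros [f Hf]. assert (Hsum := is_series_of_cos_partial_unif_cvg a f Hf).
    split; [intros x; exists (f x); apply Hsum|].
    destruct (limit_bounded_of_cos_partial_unif_cvg a f Hf) as [M HM].
    exists M. intros x. now rewrite (is_series_unique _ _ (Hsum x)).
  - intros [H _]. now apply cos_partial_unif_cvg_of_ex_series, ex_series_of_cos_series.
Qed.
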